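(* Let $G_{\mathrm{inv}}$ be the $q$-grammar with master variables $S=\{x,y\}$, rule $x_j\mapsto q^jy_jx_{j+1}$, $y_j\mapsto q^jy_jx_{j+1}$ ($j\ge0$), and order AIO, and let $D$ be its $q$-derivative. Let $\phi$ be the evaluation with $\phi(x_j)=x$, $\phi(y_j)=y$ for all $j\ge0$ ($x,y$ commuting indeterminates). Then for all $n\ge1$, \[ \phi\big(D^n(x_0)\big)=A^{\mathrm{inv}}_n(q;x,y):=\sum_{\sigma\in\mathfrak{S}_n}q^{\operatorname{inv}(\sigma)}x^{\operatorname{asc}(\sigma)}y^{\operatorname{des}(\sigma)}. \]
   Context: Let $\mathbb{K}$ be a commutative ring with unity and characteristic zero, $q$ an indeterminate. For a set $S$ of master variables, $\mathbb{S}=\{s_i:s\in S,\ i\in\{0,1,2,\dots\}\}$ is a set of non-commuting variables, $F(\mathbb{S})$ the free group on $\mathbb{S}$ and $\mathbb{E}=\mathbb{K}[q][F(\mathbb{S})]$ its group algebra. A rule $R$ assigns to each $s_i$ an element $R(s_i)\in\mathbb{E}$, extended by $R(s_i^{-1})=-s_i^{-1}R(s_i)s_{i+1}^{-1}$. The up-arrow $\uparrow$ is the linear map replacing each letter $s_i^{\pm1}$ of a word by $s_{i+1}^{\pm1}$. An order rewrites each word by permuting its letters (extended linearly); AIO stably reorders the letters according to the position of their underlying variable in the sequence $x_0,y_0,x_1,y_1,x_2,y_2,\dots$. A $q$-grammar is a triple $(S,R,\rho)$; its $q$-derivative is the $\mathbb{K}[q]$-linear map $D$ with $D(w_1\cdots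 w_n)=\sum_{j=1}^n\rho\big(w_1\cdots w_{j-1}R(w_j)\uparrow(w_{j+1}\cdots w_n)\big)$ for letters $w_j\in\mathbb{S}\cup\mathbb{S}^{-1}$, $D^0=\mathrm{id}$, $D^k=D\circ D^{k-1}$. An evaluation sends each $s_i$ to an element of a commutative ring containing $\mathbb{K}[q]$ and extends to a $\mathbb{K}[q]$-linear ring morphism with $\phi(s_i^{-1})=\phi(s_i)^{-1}$. For $\sigma\in\mathfrak{S}_n$ with $\sigma_0=\sigma_{n+1}=0$, $0\le i\le n$ is a descent if $\sigma_i>\sigma_{i+1}$, an ascent otherwise; $\operatorname{des},\operatorname{asc}$ count them; $\operatorname{inv}(\sigma)=\#\{(i,j):1\le i<j\le n,\ \sigma_i>\sigma_j\}$. *)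

From HB Require Import structures.
From mathcomp Require Import all_boot all_order all_algebra all_fingroup.
Set Implicit Arguments. Unset Strict Implicit. Unset Printing Implicit Defensive.
Import Order.TTheory GRing.Theory Num.Theory.
Local Open Scope ring_scope.

Inductive mvar := mx | my.

(* A letter s_i^{+-1}: ((s, i), inv) where inv = true means s_i^{-1}. *)
Definition letter := ((mvar * nat) * bool)%type.
Definition lvar (l : letter) : mvar := l.1.1.
Definition lidx (l : letter) : nat := l.1.2.
Definition linv (l : letter) : bool := l.2.

Definition word := seq letter.

(* Elements of E = K[q][F(S)], represented as formal K[q]-linear
   combinations (lists of (coefficient, word)). *)
Definition qelt (K : comRingType) := seq ({poly K} * word).

Definition qrule (K : comRingType) := mvar -> nat -> qelt K.

Definition up_letter (l : letter) : letter := ((lvar l, (lidx l).+1), linv l).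
Definition upw (w : word) : word := map up_letter w.

Definition rule_letter (K : comRingType) (R : qrule K) (l : letter) : qelt K :=
  if linv l then
    [seq (- p.1, ((lvar l, lidx l), true) :: p.2 ++ [:: ((lvar l, (lidx l).+1), true)])
    | p <- R (lvar l) (lidx l)]
  else R (lvar l) (lidx l).

Definition order := word -> word.

(* AIO: stable reordering by position of the underlying variable in
   x_0, y_0, x_1, y_1, ... (mathcomp's [sort] is a stable merge sort). *)
Definition aio_key (l : letter) : nat :=
  (lidx l).*2 + (match lvar l with mx => 0 | my => 1 end)%N.
Definition AIO : order := sort (fun a b => (aio_key a <= aio_key b)%N).

Definition dummy_letter : letter := ((mx, 0%N), false).

Definition qderiv_word (K : comRingType) (R : qrule K) (rho : order) (w : word)
  : qelt K :=
  flatten [seq [seq (p.1, rho (take j w ++ p.2 ++ upw (drop j.+1 w)))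
               | p <- rule_letter R (nth dummy_letter w j)]
          | j <- iota 0 (size w)].

Definition qderiv (K : comRingType) (R : qrule K) (rho : order) (e : qelt K)
  : qelt K :=
  flatten [seq [seq (c.1 * p.1, p.2) | p <- qderiv_word R rho c.2] | c <- e].

Definition qderiv_iter (K : comRingType) (R : qrule K) (rho : order) (n : nat)
  (e : qelt K) : qelt K := iter n (qderiv R rho) e.

Definition Ginv_rule (K : comRingType) : qrule K :=
  fun _ j => [:: ('X ^+ j, [:: ((my, j), false); ((mx, j.+1), false)])].

(* Target ring K[q][x,y] = {poly {poly {poly K}}}:
   q = innermost variable, x = middle, y = outermost. *)
Definition tgt (K : comRingType) := {poly {poly {poly K}}}.
Definition qT (K : comRingType) : tgt K := ('X%:P)%:P.
Definition xT (K : comRingType) : tgt K := 'X%:P.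
Definition yT (K : comRingType) : tgt K := 'X.
Definition embq (K : comRingType) (c : {poly K}) : tgt K := c%:P%:P.

(* Evaluation phi: phi(x_j) = x, phi(y_j) = y; inverse letters are sent to
   the given values xi, yi. *)
Definition phi_letter (K : comRingType) (xi yi : tgt K) (l : letter) : tgt K :=
  match lvar l, linv l with
  | mx, false => xT K
  | my, false => yT K
  | mx, true => xi
  | my, true => yi
  end.
Definition phi_word (K : comRingType) (xi yi : tgt K) (w : word) : tgt K :=
  \prod_(l <- w) phi_letter xi yi l.
Definition phi (K : comRingType) (xi yi : tgt K) (e : qelt K) : tgt K :=
  \sum_(p <- e) embq p.1 * phi_word xi yi p.2.

Definition x0 (K : comRingType) : qelt K := [:: (1, [:: ((mx, 0%N), false)])].

(* Permutation statistics; sigma_i := sigma(i-1)+1 for 1 <= i <= n,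
   sigma_0 = sigma_{n+1} = 0. *)
Definition pval (n : nat) (s : 'S_n) (i : nat) : nat :=
  if i is i'.+1 then
    (if @insub _ (fun k => (k < n)%N) 'I_n i' is Some k then (s k).+1 else 0%N)
  else 0%N.

Definition des (n : nat) (s : 'S_n) : nat :=
  count (fun i => (pval s i.+1 < pval s i)%N) (iota 0 n.+1).
Definition asc (n : nat) (s : 'S_n) : nat :=
  count (fun i => ~~ (pval s i.+1 < pval s i)%N) (iota 0 n.+1).
Definition inv (n : nat) (s : 'S_n) : nat :=
  #|[set ij : 'I_n * 'I_n | (ij.1 < ij.2)%N && (s ij.2 < s ij.1)%N]|.

Definition Ainv (K : comRingType) (n : nat) : tgt K :=
  \sum_(s : 'S_n) qT K ^+ inv s * xT K ^+ asc s * yT K ^+ des s.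

From Pilot Require Import Defs.

(* Every word of D^n(x_0) is consecutive: its letters carry the indices 0, 1, ..., n in
   order, so it is AIO-sorted and determined by its sequence of master variables, and D
   replaces its j-th letter by y x with weight q^j.  On the permutation side, mark the gaps
   0, ..., n of sigma by x (ascent) or y (descent) and read them from right to left.
   Inserting n+1 into slot i of sigma in S_n turns gap i into the pair x y, i.e. the letter
   at position j = n - i of the reversed word into y x, and creates exactly n - i new
   inversions.  So both sides unfold along the same recursion. *)
From mathcomp Require Import all_boot all_algebra all_fingroup zify.
Set Implicit Arguments. Unset Strict Implicit. Unset Printing Implicit Defensive.
Import GRing.Theory.
Local Open Scope ring_scope.

Section QDerivLinear.
Variables (K : comRingType) (R : qrule K) (rho : Defs.order).

Definition scale_qelt (a : {poly K}) (e : qelt K) : qelt K :=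
  [seq (a * c.1, c.2) | c <- e].

Local Notation D := (qderiv R rho).

Lemma qderiv_cat e1 e2 : D (e1 ++ e2) = D e1 ++ D e2.
Proof. by rewrite /qderiv map_cat flatten_cat. Qed.

Lemma qderiv_scale a e : D (scale_qelt a e) = scale_qelt a (D e).
Proof.
elim: e => [//|c e IHe].
rewrite /= -[_ :: scale_qelt a e]cat1s -[c :: e]cat1s !qderiv_cat IHe /scale_qelt map_cat.
by congr (_ ++ _); rewrite /qderiv /= !cats0 -map_comp; apply: eq_map => p /=; rewrite mulrA.
Qed.

Lemma iter_qderiv_cat k e1 e2 : iter k D (e1 ++ e2) = iter k D e1 ++ iter k D e2.
Proof. by elim: k => //= k ->; rewrite qderiv_cat. Qed.

Lemma iter_qderiv_scale k a e : iter k D (scale_qelt a e) = scale_qelt a (iter k D e).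
Proof. by elim: k => //= k ->; rewrite qderiv_scale. Qed.

Variables xi yi : tgt K.

Lemma phi_cat e1 e2 : phi xi yi (e1 ++ e2) = phi xi yi e1 + phi xi yi e2.
Proof. by rewrite /phi big_cat. Qed.

Lemma phi_scale a e : phi xi yi (scale_qelt a e) = embq a * phi xi yi e.
Proof.
rewrite /phi big_map mulr_sumr; apply: eq_bigr => c _.
by rewrite /embq !rmorphM mulrA.
Qed.

Definition phiD (k : nat) (w : word) : tgt K := phi xi yi (iter k D [:: (1, w)]).

Lemma phiDS k w : phiD k.+1 w = phi xi yi (iter k D (D [:: (1, w)])).
Proof. by rewrite /phiD iterSr. Qed.

Lemma phi_iter_qderiv k e :
  phi xi yi (iter k D e) = \sum_(c <- e) embq c.1 * phiD k c.2.
Proof.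
elim: e => [|[a w] e IHe].
  have -> : iter k D [::] = [::] by elim: k => //= k ->.
  by rewrite /phi !big_nil.
have split_head : (a, w) :: e = scale_qelt a [:: (1, w)] ++ e by rewrite /scale_qelt /= mulr1.
by rewrite {1}split_head iter_qderiv_cat iter_qderiv_scale phi_cat phi_scale IHe big_cons.
Qed.

End QDerivLinear.

Fixpoint cword (m : nat) (g : seq mvar) : word :=
  if g is a :: g' then ((a, m), false) :: cword m.+1 g' else [::].

Lemma size_cword m g : size (cword m g) = size g.
Proof. by elim: g m => //= a g IHg m; rewrite IHg. Qed.

Lemma upw_cword m g : upw (cword m g) = cword m.+1 g.
Proof. by elim: g m => //= a g IHg m; rewrite IHg. Qed.

Lemma cword_cat m g1 g2 : cword m (g1 ++ g2) = cword m g1 ++ cword (m + size g1) g2.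
Proof. by elim: g1 m => [|a g IHg] m /=; rewrite ?addn0 // IHg addSnnS. Qed.

Lemma take_cword j m g : take j (cword m g) = cword m (take j g).
Proof. by elim: g j m => [|a g IHg] [|j] m //=; rewrite IHg. Qed.

Lemma drop_cword j m g : drop j (cword m g) = cword (m + j) (drop j g).
Proof. by elim: g j m => [|a g IHg] [|j] m //=; rewrite ?addn0 // IHg addSnnS. Qed.

Lemma nth_cword j m g : (j < size g)%N ->
  nth dummy_letter (cword m g) j = ((nth mx g j, (m + j)%N), false).
Proof. by elim: g j m => [|a g IHg] [|j] m //=; rewrite ?addn0 // => /IHg ->; rewrite addSnnS. Qed.

Definition aio_le (a b : letter) : bool := (aio_key a <= aio_key b)%N.

Lemma path_cword l m g : (aio_key l <= m.*2)%N -> path aio_le l (cword m g).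
Proof.
elim: g l m => [//|a g IHg] l m le_lm /=; apply/andP; split.
  exact: leq_trans le_lm (leq_addr _ _).
by apply: IHg; rewrite /aio_key /= doubleS; case: a; rewrite ?addn0 ?addn1 // ltnW.
Qed.

Lemma AIO_cword m g : AIO (cword m g) = cword m g.
Proof.
apply: sorted_sort; first by move=> a b c; apply: leq_trans.
by case: g => //= a g; apply: path_cword; case: a; rewrite /aio_key /lidx /=; lia.
Qed.

Definition split_yx (g : seq mvar) (j : nat) : seq mvar :=
  take j g ++ my :: mx :: drop j.+1 g.

Section Ginv.
Variable K : comRingType.
Local Notation D := (qderiv (Ginv_rule K) AIO).

Lemma qderiv_word_cword g :
  qderiv_word (Ginv_rule K) AIO (cword 0 g) =
  [seq ('X^j, cword 0 (split_yx g j)) | j <- iota 0 (size g)].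
Proof.
rewrite /qderiv_word size_cword -[RHS]flatten_map1; congr flatten.
apply/eq_in_map => j; rewrite mem_iota add0n => /andP[_ lt_jg].
rewrite nth_cword // /rule_letter /= add0n take_cword drop_cword upw_cword add0n.
rewrite /lidx /= -[[:: _, _ & cword j.+2 _]]/(cword j [:: my, mx & drop j.+1 g]).
have le_jg : (j <= size g)%N := ltnW lt_jg.
have := cword_cat 0 (take j g) [:: my, mx & drop j.+1 g].
rewrite add0n size_takel // => <-.
by rewrite AIO_cword.
Qed.

Variables xi yi : tgt K.
Local Notation phiD := (phiD (Ginv_rule K) AIO xi yi).

Lemma phiD_succ k g :
  phiD k.+1 (cword 0 g) = \sum_(j < size g) embq 'X^j * phiD k (cword 0 (split_yx g j)).
Proof.
have D_cword : D [:: (1, cword 0 g)] = [seq ('X^j, cword 0 (split_yx g j)) | j <- iota 0 (size g)].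
  by rewrite /qderiv /= cats0 qderiv_word_cword -map_comp; apply: eq_map => j /=; rewrite mul1r.
rewrite phiDS D_cword phi_iter_qderiv big_map.
by rewrite -(big_mkord xpredT (fun j => embq 'X^j * phiD k (cword 0 (split_yx g j)))) /index_iota subn0.
Qed.

Definition is_mx (a : mvar) : bool := if a is mx then true else false.
Definition is_my (a : mvar) : bool := if a is my then true else false.

Lemma phi_word_cword m g :
  phi_word xi yi (cword m g) = xT K ^+ count is_mx g * yT K ^+ count is_my g.
Proof.
elim: g m => [|a g IHg] m; first by rewrite /phi_word big_nil mulr1.
rewrite /phi_word big_cons -/(phi_word _ _ _) IHg.
case: a; rewrite /= add0n exprS /phi_letter /lvar /linv /=; [exact: mulrA | exact: mulrCA].
Qed.

Lemma phiD0 g : phiD 0 (cword 0 g) = xT K ^+ count is_mx g * yT K ^+ count is_my g.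
Proof. by rewrite /phiD /phi big_seq1 /embq mul1r phi_word_cword. Qed.

End Ginv.

Section Pval.
Variable n : nat.
Implicit Type s : 'S_n.

Lemma pval_ord s (k : 'I_n) : Defs.pval s k.+1 = (s k).+1.
Proof. by rewrite /Defs.pval insubT //= => lt_kn; congr (s _).+1; apply: val_inj. Qed.

Lemma pval_out s k : (n <= k)%N -> Defs.pval s k.+1 = 0%N.
Proof. by move=> le_nk; rewrite /Defs.pval insubF // ltnNge le_nk. Qed.

Lemma pval_le s k : (Defs.pval s k <= n)%N.
Proof.
case: k => [//|k]; case: (ltnP k n) => [lt_kn|/pval_out->//].
by rewrite (pval_ord s (Ordinal lt_kn)).
Qed.

End Pval.

Lemma pval_lift_max n (s : 'S_n) (i : 'I_n.+1) k :
  Defs.pval (lift_perm i ord_max s) k =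
  if (k <= i)%N then Defs.pval s k else if k == i.+1 then n.+1 else Defs.pval s k.-1.
Proof.
have le_in : (i <= n)%N by rewrite -ltnS.
case: k => [//|k]; case: (ltnP k n.+1) => [lt_kn|le_nk]; last first.
  rewrite pval_out // ifF; last by lia.
  by rewrite ifF; [case: k le_nk => // k le_nk; rewrite pval_out | lia].
rewrite (pval_ord _ (Ordinal lt_kn)).
case: (unliftP i (Ordinal lt_kn)) => [j k_lift | k_i].
  rewrite k_lift lift_perm_lift lift_max.
  have -> : k = bump i (j : 'I_n) := congr1 val k_lift.
  rewrite /bump; case: (leqP i (j : 'I_n)) => [le_ij|lt_ji].
    by rewrite add1n !ifF ?pval_ord //; apply/negbTE; lia.
  by rewrite add0n ifT ?pval_ord.
rewrite k_i lift_perm_id; have -> : k = i := congr1 val k_i.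
by rewrite ifF ?eqxx //; apply/negbTE; lia.
Qed.

Lemma map_iota_splice (T : Type) (f g : nat -> T) (a b : T) (n i : nat) :
  (i <= n)%N ->
  (forall k, (k < i)%N -> g k = f k) -> g i = a -> g i.+1 = b ->
  (forall k, (i < k)%N -> g k.+1 = f k) ->
  map g (iota 0 n.+2) =
  take i (map f (iota 0 n.+1)) ++ a :: b :: drop i.+1 (map f (iota 0 n.+1)).
Proof.
move=> le_in g_lt g_i g_Si g_gt.
have -> : n.+2 = (i + (n - i).+2)%N by lia.
rewrite -map_take -map_drop take_iota drop_iota iotaD map_cat /= g_i g_Si.
rewrite (_ : minn i n.+1 = i); last by lia.
congr (_ ++ [:: _, _ & _]).
  by apply/eq_in_map => k; rewrite mem_iota => /andP[_ /g_lt].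
rewrite !add0n subSS -[i.+2]/(1 + i.+1)%N iotaDl -map_comp.
by apply/eq_in_map => k; rewrite mem_iota => /andP[/g_gt].
Qed.

Definition gap_type (a b : nat) : mvar := if (b < a)%N then my else mx.

Definition gap_seq n (s : 'S_n) : seq mvar :=
  [seq gap_type (Defs.pval s k) (Defs.pval s k.+1) | k <- iota 0 n.+1].

Definition gap_word n (s : 'S_n) : seq mvar := rev (gap_seq s).

Lemma size_gap_seq n (s : 'S_n) : size (gap_seq s) = n.+1.
Proof. by rewrite size_map size_iota. Qed.

Lemma gap_seq_lift_max n (s : 'S_n) (i : 'I_n.+1) :
  gap_seq (lift_perm i ord_max s) = take i (gap_seq s) ++ mx :: my :: drop i.+1 (gap_seq s).
Proof.
have le_in : (i <= n)%N by rewrite -ltnS.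
apply: map_iota_splice => // [k lt_ki | | | k lt_ik]; rewrite !pval_lift_max.
- by rewrite !ifT //; lia.
- by rewrite leqnn ltnn eqxx /gap_type ltnNge (leqW (pval_le s i)).
- rewrite ltnn eqxx ifF; last by lia.
  by rewrite ifF; [rewrite /gap_type ltnS pval_le | lia].
- by rewrite !ifF //; lia.
Qed.

Lemma gap_word_lift_max n (s : 'S_n) (i : 'I_n.+1) :
  gap_word (lift_perm i ord_max s) = split_yx (gap_word s) (n - i).
Proof.
have le_in : (i <= n)%N by rewrite -ltnS.
rewrite /gap_word gap_seq_lift_max /split_yx take_rev drop_rev size_gap_seq.
rewrite rev_cat !rev_cons -!cats1 -!catA.
have -> : (n.+1 - (n - i) = i.+1)%N by lia.
by have -> : (n.+1 - (n - i).+1 = i)%N by lia.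
Qed.

Lemma count_mx_gap_word n (s : 'S_n) : count is_mx (gap_word s) = Defs.asc s.
Proof. by rewrite count_rev count_map; apply: eq_count => k; rewrite /= /gap_type; case: ifP. Qed.

Lemma count_my_gap_word n (s : 'S_n) : count is_my (gap_word s) = Defs.des s.
Proof. by rewrite count_rev count_map; apply: eq_count => k; rewrite /= /gap_type; case: ifP. Qed.

Lemma inv_sum n (s : 'S_n) :
  Defs.inv s = (\sum_(a : 'I_n) \sum_(b : 'I_n) ((a < b) && (s b < s a) : nat))%N.
Proof.
rewrite /Defs.inv -sum1_card big_mkcond pair_big /=.
by apply: eq_bigr => -[a b] _; rewrite in_set; case: ifP.
Qed.

Lemma sum_ord_geq n i : (i <= n)%N -> (\sum_(b < n) (i <= b : nat))%N = (n - i)%N.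
Proof.
move=> le_in; rewrite -(big_mkord xpredT (fun b => (i <= b : nat))) (@big_cat_nat _ _ _ i) //=.
rewrite big_nat_cond big1 => [|b /andP[/andP[_ lt_bi] _]]; last by rewrite leqNgt lt_bi.
rewrite add0n big_nat_cond (eq_bigr (fun=> 1%N)) => [|b /andP[/andP[-> _] _]] //.
by rewrite -big_nat_cond sum_nat_const_nat muln1.
Qed.

Lemma inv_lift_max n (s : 'S_n) (i : 'I_n.+1) :
  Defs.inv (lift_perm i ord_max s) = (Defs.inv s + (n - i))%N.
Proof.
have le_in : (i <= n)%N by rewrite -ltnS.
have val_lift a : nat_of_ord (lift_perm i ord_max s (lift i a)) = s a.
  by rewrite lift_perm_lift lift_max.
rewrite !inv_sum (bigD1_ord i) //= addnC; congr (_ + _)%N.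
  apply: eq_bigr => a _; rewrite (bigD1_ord i) //= lift_perm_id val_lift.
  rewrite (leq_gtF (ltnW (ltn_ord (s a)))) andbF add0n.
  apply: eq_bigr => b _; rewrite !val_lift /bump.
  by case: (leqP i a) => [le_ia|lt_ai]; case: (leqP i b) => [le_ib|lt_bi]; congr (nat_of_bool _); lia.
rewrite (bigD1_ord i) //= ltnn add0n -(sum_ord_geq le_in); apply: eq_bigr => b _.
rewrite val_lift lift_perm_id ltn_ord andbT /bump.
by case: (leqP i b) => [le_ib|lt_bi]; lia.
Qed.

Lemma sum_perm_lift_max (R : nmodType) n (F : 'S_n.+1 -> R) :
  \sum_(t : 'S_n.+1) F t = \sum_(i : 'I_n.+1) \sum_(s : 'S_n) F (lift_perm i ord_max s).
Proof.
pose f (p : 'I_n.+1 * 'S_n) := lift_perm p.1 ord_max p.2.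
have f_inj : injective f.
  move=> [i s] [i' s'] eq_f; rewrite /f /= in eq_f.
  have eq_i : i = i'.
    by apply: (@perm_inj _ (lift_perm i ord_max s)); rewrite {2}eq_f !lift_perm_id.
  subst i'; congr (_, _); apply/permP => k; apply: (@lift_inj _ ord_max).
  by rewrite -(lift_perm_lift i) -(lift_perm_lift i ord_max s') eq_f.
have f_bij : bijective f.
  by apply: inj_card_bij => //; rewrite card_prod card_ord !card_Sn factS.
by rewrite (reindex f (onW_bij _ f_bij)) pair_big.
Qed.

Lemma phi_iter_qderiv_x0 (K : comRingType) (xi yi : tgt K) n k :
  phi xi yi (iter k (qderiv (Ginv_rule K) AIO) (iter n (qderiv (Ginv_rule K) AIO) (x0 K)))
  = \sum_(s : 'S_n) embq 'X^(Defs.inv s) * phiD (Ginv_rule K) AIO xi yi k (cword 0 (gap_word s)).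
Proof.
elim: n k => [|n IHn] k.
  rewrite phi_iter_qderiv big_seq1 (eq_bigr (fun=> embq 1 * phiD (Ginv_rule K) AIO xi yi k
    [:: ((mx, 0%N), false)])) ?sumr_const ?card_Sn // => s _.
  by rewrite inv_sum big_ord0.
rewrite iterS -iterSr IHn.
under eq_bigr => s _ do rewrite phiD_succ size_rev size_gap_seq mulr_sumr.
rewrite exchange_big sum_perm_lift_max (reindex_inj rev_ord_inj) /=.
apply: eq_bigr => i _; apply: eq_bigr => s _.
by rewrite inv_lift_max gap_word_lift_max subSS mulrA exprD /embq !rmorphM.
Qed.

Theorem theorem5p4 (K : comRingType)
  (charK0 : forall m : nat, (m%:R : K) = 0 -> m = 0%N)
  (xi yi : tgt K) (n : nat) :
  (1 <= n)%N ->
  phi xi yi (qderiv_iter (Ginv_rule K) AIO n (x0 K)) = Ainv K n.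
Proof.
(* The identity holds for every n and K; xi and yi are irrelevant since no inverse
   letter ever occurs. *)
move=> _.
rewrite /qderiv_iter (phi_iter_qderiv_x0 xi yi n 0); apply: eq_bigr => s _.
by rewrite phiD0 count_mx_gap_word count_my_gap_word mulrA /embq /qT !rmorphXn.
Qed.
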